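(* Let $A$ be any one of the following complex Leibniz algebras: (i) for $n\ge 2$, $R$ with basis $\{h,e_1,\dots,e_n\}$ and nonzero products $[e_i,e_1]=e_{i+1}$ ($1\le i\le n-1$), $[h,e_1]=-e_1$, $[e_i,h]=ie_i$ ($1\le i\le n$); (ii) for $n\ge 4$, $R(F_n^1)$, $\mathcal L_1$ or $\mathcal L_2$ with basis $\{h_1,h_2,e_1,\dots,e_n\}$, where $R(F_n^1)$ has nonzero products $[e_i,e_1]=e_{i+1}$ ($2\le i\le n-1$), $[e_1,h_2]=e_1$, $[h_2,e_1]=-e_1$, $[e_i,h_1]=e_i$, $[e_i,h_2]=(i-1)e_i$ ($2\le i\le n$); $\mathcal L_1$ has nonzero products $[e_1,e_1]=e_3$, $[e_i,e_1]=e_{i+1}$ ($3\le i\le n-1$), $[e_1,h_2]=e_1$, $[h_2,e_1]=-e_1$, $[e_2,h_1]=e_2$, $[h_1,e_2]=-e_2$, $[e_i,h_2]=(i-1)e_i$ ($3\le i\le n$); and $\mathcal L_2$ is as $\mathcal L_1$ but with $[h_1,e_2]=0$. Then the Leibniz algebra $\mathrm{Bider}(A)$ is isomorphic to $A$.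
   Context: Leibniz algebras are right Leibniz over $\mathbb C$: $[x,[y,z]]=[[x,y],z]-[[x,z],y]$. Unlisted products are zero. A derivation is a linear $d$ with $d([x,y])=[d(x),y]+[x,d(y)]$; an anti-derivation is a linear $D$ with $D([x,y])=[D(x),y]-[D(y),x]$; a biderivation is a pair $(d,D)$ of a derivation and an anti-derivation with $[x,d(y)]=[x,D(y)]$ for all $x,y$. $\mathrm{Bider}(A)$ is the set of all biderivations with the Leibniz bracket $[(d,D),(d',D')]=(d\circ d'-d'\circ d,\ D\circ d'-d'\circ D)$. *)

(* Field of scalars: the complex numbers R[i] built over an
   arbitrary realType R (any realType is a model of the real numbers). *)
From HB Require Import structures.
From mathcomp Require Import all_boot all_order all_algebra.
From mathcomp Require Import reals complex.
Set Implicit Arguments. Unset Strict Implicit. Unset Printing Implicit Defensive.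
Import Order.TTheory GRing.Theory Num.Theory.
Local Open Scope ring_scope.

Section Leibniz.
Variable F : fieldType.
Variable N : nat.
Notation V := 'rV[F]_N.

(* A multiplication table is a list of the nonzero products of basis vectors:
   an entry (i, j, v) means [b_i, b_j] = v, where b_k = delta_mx 0 k.
   Unlisted products are zero. *)
Definition table := seq (nat * nat * V).

Definition prod_of (l : table) (i j : 'I_N) : V :=
  \sum_(t <- l | (t.1.1 == val i) && (t.1.2 == val j)) t.2.

Definition brk (l : table) (x y : V) : V :=
  \sum_(i < N) \sum_(j < N) (x 0 i * y 0 j) *: prod_of l i j.

Definition lin (f : V -> V) := forall (a : F) x y, f (a *: x + y) = a *: f x + f y.

Definition is_der (br : V -> V -> V) (d : V -> V) :=
  lin d /\ forall x y, d (br x y) = br (d x) y + br x (d y).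

Definition is_antider (br : V -> V -> V) (D : V -> V) :=
  lin D /\ forall x y, D (br x y) = br (D x) y - br (D y) x.

Definition is_bider (br : V -> V -> V) (p : (V -> V) * (V -> V)) :=
  [/\ is_der br p.1, is_antider br p.2 & forall x y, br x (p.1 y) = br x (p.2 y)].

Definition bider_br (p q : (V -> V) * (V -> V)) : (V -> V) * (V -> V) :=
  (fun v => p.1 (q.1 v) - q.1 (p.1 v), fun v => p.2 (q.1 v) - q.1 (p.2 v)).

Definition peq (p q : (V -> V) * (V -> V)) :=
  forall v, p.1 v = q.1 v /\ p.2 v = q.2 v.

Definition bider_iso_self (br : V -> V -> V) :=
  exists phi : V -> (V -> V) * (V -> V),
    [/\ forall x, is_bider br (phi x),
        forall (a : F) x y, peq (phi (a *: x + y))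
           (fun v => a *: (phi x).1 v + (phi y).1 v,
            fun v => a *: (phi x).2 v + (phi y).2 v),
        forall x y, peq (phi x) (phi y) -> x = y,
        forall p, is_bider br p -> exists x, peq (phi x) p
      & forall x y, peq (phi (br x y)) (bider_br (phi x) (phi y))].

End Leibniz.

Definition bv (F : fieldType) (N k : nat) : 'rV[F]_N.+1 := delta_mx 0 (inord k).

(* (i) Algebra R, dimension n+1: h = b_0, e_k = b_k (1 <= k <= n). *)
Definition tabR (F : fieldType) (n : nat) : table F n.+1 :=
  let e := bv F n in
  [seq (k, 1%N, e k.+1) | k <- iota 1 (n - 1)]            (* [e_k,e_1] = e_{k+1}, 1<=k<=n-1 *)
  ++ [:: (0%N, 1%N, - e 1%N)]                             (* [h,e_1] = -e_1 *)
  ++ [seq (k, 0%N, k%:R *: e k) | k <- iota 1 n].         (* [e_k,h] = k e_k, 1<=k<=n *)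

(* (ii) dimension n+2: h_1 = b_0, h_2 = b_1, e_k = b_(k+1) (1 <= k <= n). *)
Definition ev (F : fieldType) (n k : nat) : 'rV[F]_n.+2 := bv F n.+1 k.+1.

Definition tabRF (F : fieldType) (n : nat) : table F n.+2 :=
  let e := ev F n in
  [seq (k.+1, 2%N, e k.+1) | k <- iota 2 (n - 2)]         (* [e_k,e_1] = e_{k+1}, 2<=k<=n-1 *)
  ++ [:: (2%N, 1%N, e 1%N); (1%N, 2%N, - e 1%N)]          (* [e_1,h_2] = e_1, [h_2,e_1] = -e_1 *)
  ++ [seq (k.+1, 0%N, e k) | k <- iota 2 (n - 1)]         (* [e_k,h_1] = e_k, 2<=k<=n *)
  ++ [seq (k.+1, 1%N, (k - 1)%:R *: e k) | k <- iota 2 (n - 1)]. (* [e_k,h_2] = (k-1) e_k *)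

Definition tabL2 (F : fieldType) (n : nat) : table F n.+2 :=
  let e := ev F n in
  [:: (2%N, 2%N, e 3%N)]                                   (* [e_1,e_1] = e_3 *)
  ++ [seq (k.+1, 2%N, e k.+1) | k <- iota 3 (n - 3)]       (* [e_k,e_1] = e_{k+1}, 3<=k<=n-1 *)
  ++ [:: (2%N, 1%N, e 1%N); (1%N, 2%N, - e 1%N)]           (* [e_1,h_2] = e_1, [h_2,e_1] = -e_1 *)
  ++ [:: (3%N, 0%N, e 2%N)]                                (* [e_2,h_1] = e_2 *)
  ++ [seq (k.+1, 1%N, (k - 1)%:R *: e k) | k <- iota 3 (n - 2)]. (* [e_k,h_2] = (k-1) e_k, 3<=k<=n *)

Definition tabL1 (F : fieldType) (n : nat) : table F n.+2 :=
  tabL2 F n ++ [:: (0%N, 3%N, - ev F n 2%N)].              (* additionally [h_1,e_2] = -e_2 *)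

(* Proof idea: for each algebra A the map x |-> (-R_x, L_x), where R_x v = [v, x] and
   L_x v = [x, v], is a Leibniz algebra morphism A -> Bider(A). It is injective because
   no nonzero x annihilates A from both sides. It is onto because, for a biderivation
   (d, D), every derivation of A is inner, d = -R_x, and D - L_x is then an
   antiderivation with values in the right annihilator of A; every such
   antiderivation is L_z with z in the right annihilator, so (d, D) = (-R_(x+z), L_(x+z)).
   Both classifications are finite computations: a derivation or antiderivation is
   determined by its values on the generators h (resp. h_1, h_2) and e_1 (and e_2), and
   the structure relations fix these values coordinate by coordinate. *)

From HB Require Import structures.
From mathcomp Require Import all_boot all_order all_algebra.
From mathcomp Require Import reals complex.
From mathcomp Require Import ring zify.
Set Implicit Arguments. Unset Strict Implicit. Unset Printing Implicit Defensive.
Import Order.TTheory GRing.Theory Num.Theory.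
Local Open Scope ring_scope.

Section LinearMaps.
Variables (F : fieldType) (N : nat).
Local Notation V := 'rV[F]_N.
Variable f : V -> V.
Hypothesis f_lin : lin f.

Lemma lin0 : f 0 = 0.
Proof.
have := f_lin 1 0 0; rewrite !scale1r addr0 => E.
by apply: (@addrI _ (f 0)); rewrite addr0 -E.
Qed.

Lemma linD x y : f (x + y) = f x + f y.
Proof. by rewrite -{1}(scale1r x) f_lin scale1r. Qed.

Lemma linZ a x : f (a *: x) = a *: f x.
Proof. by rewrite -(addr0 (a *: x)) f_lin lin0 addr0. Qed.

Lemma linN x : f (- x) = - f x.
Proof. by rewrite -scaleN1r linZ scaleN1r. Qed.

Lemma linB x y : f (x - y) = f x - f y.
Proof. by rewrite linD linN. Qed.
End LinearMaps.

Section Relations.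
Variables (F : fieldType) (N : nat).
Local Notation V := 'rV[F]_N.
Variables (br : V -> V -> V) (u v w : V).
Hypothesis uv : br u v = w.

Lemma der_rel d : is_der br d -> d w = br (d u) v + br u (d v).
Proof. by case=> _ d_br; rewrite -uv d_br. Qed.

Lemma antider_rel D : is_antider br D -> D w = br (D u) v - br (D v) u.
Proof. by case=> _ D_br; rewrite -uv D_br. Qed.
End Relations.

Lemma der_rel0 (F : fieldType) (N : nat) (br : 'rV[F]_N -> _ -> _) u v d :
  br u v = 0 -> is_der br d -> br (d u) v + br u (d v) = 0.
Proof. by move=> uv der_d; rewrite -(der_rel uv der_d) (lin0 der_d.1). Qed.

Lemma antider_rel0 (F : fieldType) (N : nat) (br : 'rV[F]_N -> _ -> _) u v D :
  br u v = 0 -> is_antider br D -> br (D u) v - br (D v) u = 0.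
Proof. by move=> uv anti_D; rewrite -(antider_rel uv anti_D) (lin0 anti_D.1). Qed.

Section LeibnizAlgebra.
Variables (F : fieldType) (N : nat).
Local Notation V := 'rV[F]_N.
Variable br : V -> V -> V.
Hypothesis lin_brl : forall z, lin (br^~ z).
Hypothesis lin_brr : forall z, lin (br z).
Hypothesis leibniz : forall x y z, br x (br y z) = br (br x y) z - br (br x z) y.

Lemma brDl x y z : br (x + y) z = br x z + br y z. Proof. exact: linD (lin_brl z) x y. Qed.
Lemma brDr x y z : br z (x + y) = br z x + br z y. Proof. exact: linD (lin_brr z) x y. Qed.
Lemma brNl x z : br (- x) z = - br x z. Proof. exact: linN (lin_brl z) x. Qed.
Lemma brNr x z : br z (- x) = - br z x. Proof. exact: linN (lin_brr z) x. Qed.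
Lemma brBl x y z : br (x - y) z = br x z - br y z. Proof. exact: linB (lin_brl z) x y. Qed.
Lemma brBr x y z : br z (x - y) = br z x - br z y. Proof. exact: linB (lin_brr z) x y. Qed.

Lemma br_skew_right y x z : br y (br x z) = - br y (br z x).
Proof.
have sq u : br y (br u u) = 0 by rewrite leibniz subrr.
apply/eqP; rewrite -subr_eq0 opprK -brDr.
by have := sq (x + z); rewrite !(brDl, brDr) !sq add0r addr0 => ->.
Qed.

Lemma right_mul_der x : is_der br (fun v => - br v x).
Proof.
split=> [a u v | u v]; first by rewrite lin_brl opprD scalerN.
by rewrite brNl brNr leibniz opprB addrA addNr add0r.
Qed.

Lemma left_mul_antider x : is_antider br (br x).
Proof. by split=> [|u v]; [exact: lin_brr | exact: leibniz]. Qed.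

Definition center_trivial :=
  forall x, (forall v, br v x = 0) -> (forall v, br x v = 0) -> x = 0.

Definition der_inner := forall d, is_der br d -> exists x, forall v, d v = - br v x.

Definition pure_antider_inner := forall D, is_antider br D -> (forall u v, br u (D v) = 0) ->
  exists z, (forall v, br v z = 0) /\ forall v, D v = br z v.

Lemma bider_inner_of_der_inner : der_inner -> pure_antider_inner ->
  forall p, is_bider br p -> exists x, forall v, p.1 v = - br v x /\ p.2 v = br x v.
Proof.
move=> der_inner pure_inner [d D] [der_d [D_lin D_anti] dD].
rewrite /= in der_d D_lin D_anti dD *.
have [x dx] := der_inner d der_d.
pose E v := D v - br x v.
have E_anti : is_antider br E.
  split=> [a u v | u v] /=; rewrite /E.
    by rewrite D_lin lin_brr scalerBr opprD addrACA.
  by rewrite D_anti leibniz !brBl !opprD addrACA.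
have E_pure u v : br u (E v) = 0.
  by rewrite /E /= brBr -dD dx brNr br_skew_right opprK subrr.
have [z [z_annr Ez]] := pure_inner E E_anti E_pure.
exists (x + z) => v; rewrite brDr brDl z_annr addr0 -dx; split=> //.
by rewrite -Ez /E /= addrC subrK.
Qed.

Lemma bider_iso_self_of_inner :
  center_trivial -> der_inner -> pure_antider_inner -> bider_iso_self br.
Proof.
move=> center0 der_inner pure_inner.
have inner := bider_inner_of_der_inner der_inner pure_inner.
exists (fun x => (fun v => - br v x, br x)); split.
- move=> x; split; [exact: right_mul_der | exact: left_mul_antider |] => u v /=.
  by rewrite brNr br_skew_right opprK.
- by move=> a x y v; split=> /=; rewrite ?lin_brl // lin_brr opprD scalerN.
- move=> x y xy; apply/eqP; rewrite -subr_eq0; apply/eqP; apply: center0 => v.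
  + by rewrite brBr; have [/= /oppr_inj -> _] := xy v; rewrite subrr.
  + by rewrite brBl; have [_ /= ->] := xy v; rewrite subrr.
- by move=> p /inner [x xp]; exists x => v; have [-> ->] := xp v.
- move=> x y v /=; split; first by rewrite !brNl !opprK leibniz opprB.
  by rewrite brNr opprK leibniz opprB subrK.
Qed.
End LeibnizAlgebra.

Section Coordinates.
Variables (F : fieldType) (M : nat).
Local Notation N := M.+1.
Local Notation V := 'rV[F]_N.
Local Notation b := (bv F M).

Definition coordn (v : V) (i : nat) : F := if (i < N)%N then v 0 (inord i) else 0.

Lemma coordn_ord v (j : 'I_N) : coordn v j = v 0 j.
Proof. by rewrite /coordn ltn_ord inord_val. Qed.

Lemma coordn_out v i : (N <= i)%N -> coordn v i = 0.
Proof. by rewrite /coordn leqNgt => /negbTE ->. Qed.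

Lemma coordnD u v i : coordn (u + v) i = coordn u i + coordn v i.
Proof. by rewrite /coordn; case: ifP => _; rewrite ?mxE ?addr0. Qed.

Lemma coordnZ a u i : coordn (a *: u) i = a * coordn u i.
Proof. by rewrite /coordn; case: ifP => _; rewrite ?mxE ?mulr0. Qed.

Lemma coordnN u i : coordn (- u) i = - coordn u i.
Proof. by rewrite -scaleN1r coordnZ mulN1r. Qed.

Lemma coordnB u v i : coordn (u - v) i = coordn u i - coordn v i.
Proof. by rewrite coordnD coordnN. Qed.

Lemma coordn_lin a u v i : coordn (a *: u + v) i = a * coordn u i + coordn v i.
Proof. by rewrite coordnD coordnZ. Qed.

Lemma coordn0 i : coordn 0 i = 0.
Proof. by rewrite /coordn; case: ifP; rewrite ?mxE. Qed.

Lemma coordn_sum I (r : seq I) (f : I -> V) i :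
  coordn (\sum_(t <- r) f t) i = \sum_(t <- r) coordn (f t) i.
Proof.
by rewrite /coordn; case: ifP => _; [rewrite summxE | rewrite big1].
Qed.

Lemma coordn_bv j m : (j < N)%N -> coordn (b j) m = if j == m then 1 else 0.
Proof.
move=> lt_jN; rewrite /coordn /bv; case: ifP => lt_mN; last first.
  by case: eqP => // j_m; rewrite j_m lt_mN in lt_jN.
rewrite mxE /=; case: (eqVneq j m) => [-> | ne_jm]; first by rewrite eqxx.
by case: eqP => // /(congr1 val); rewrite /= !inordK // => j_m; rewrite j_m eqxx in ne_jm.
Qed.

Lemma coordn_row (f : nat -> F) j : (j < N)%N -> coordn (\row_(k < N) f k) j = f j.
Proof. by move=> lt_jN; rewrite /coordn lt_jN mxE inordK. Qed.

Lemma coordn_inj (u v : V) : (forall k, (k < N)%N -> coordn u k = coordn v k) -> u = v.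
Proof. by move=> uv; apply/rowP => k; rewrite -!coordn_ord uv. Qed.

Lemma coordn_as_sum v n : coordn v n = \sum_(j < N | n == val j) v 0 j.
Proof.
rewrite /coordn; case: ifP => lt_nN; last first.
  by rewrite big_pred0 // => j; apply/eqP => n_j; rewrite n_j ltn_ord in lt_nN.
rewrite (big_pred1 (inord n)) // => j /=.
by apply/eqP/eqP => [-> | ->]; rewrite ?inord_val ?inordK.
Qed.

Lemma brk_table_sum (l : table F N) x y :
  brk l x y = \sum_(t <- l) (coordn x t.1.1 * coordn y t.1.2) *: t.2.
Proof.
rewrite /brk /prod_of.
under eq_bigr => i _ do under eq_bigr => j _ do rewrite scaler_sumr big_mkcond.
under eq_bigr => i _ do rewrite exchange_big.
rewrite exchange_big; apply: eq_bigr => t _.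
rewrite coordn_as_sum big_distrl scaler_suml /= [RHS]big_mkcond; apply: eq_bigr => i _.
case: eqP => /= [t_i | _]; last by rewrite big1.
rewrite coordn_as_sum big_distrr scaler_suml [RHS]big_mkcond; apply: eq_bigr => j _.
by case: eqP => //= _; rewrite scalerA.
Qed.

Lemma coordn_brk (l : table F N) x y k :
  coordn (brk l x y) k = \sum_(t <- l) coordn x t.1.1 * coordn y t.1.2 * coordn t.2 k.
Proof. by rewrite brk_table_sum coordn_sum; apply: eq_bigr => t _; rewrite coordnZ. Qed.

Lemma lin_brkl (l : table F N) z : lin (brk l ^~ z).
Proof.
move=> a x y; apply: coordn_inj => k _; rewrite coordn_lin !coordn_brk mulr_sumr -big_split /=.
by apply: eq_bigr => t _; rewrite coordn_lin; ring.
Qed.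

Lemma lin_brkr (l : table F N) z : lin (brk l z).
Proof.
move=> a x y; apply: coordn_inj => k _; rewrite coordn_lin !coordn_brk mulr_sumr -big_split /=.
by apply: eq_bigr => t _; rewrite coordn_lin; ring.
Qed.
End Coordinates.

Section Generators.
Variables (F : fieldType) (M : nat).
Local Notation N := M.+1.
Local Notation V := 'rV[F]_N.
Local Notation b := (bv F M).
Variable br : V -> V -> V.

Definition bracket_generated (k : nat) :=
  forall j, (k <= j < M)%N ->
    exists i s, [/\ (i <= j)%N, (s <= j)%N & br (b i) (b s) = b j.+1].

Lemma lin_eq_on_basis (f g : V -> V) : lin f -> lin g ->
  (forall j, (j < N)%N -> f (b j) = g (b j)) -> forall v, f v = g v.
Proof.
move=> f_lin g_lin fg v; rewrite (row_sum_delta v).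
rewrite (big_morph f (linD f_lin) (lin0 f_lin)) (big_morph g (linD g_lin) (lin0 g_lin)).
by apply: eq_bigr => j _; rewrite !linZ // -[j]inord_val fg.
Qed.

Lemma lin_eq_of_generators (f g : V -> V) k : lin f -> lin g ->
  (forall u v, f u = g u -> f v = g v -> f (br u v) = g (br u v)) ->
  bracket_generated k -> (forall j, (j <= k)%N -> f (b j) = g (b j)) ->
  forall v, f v = g v.
Proof.
move=> f_lin g_lin fg_br gen fg_gen; apply: lin_eq_on_basis => // j.
elim/ltn_ind: j => -[_ _ | j IH lt_jN]; first exact: fg_gen.
have [le_jk | lt_kj] := leqP j.+1 k; first exact: fg_gen.
have /gen [i [s [le_ij le_sj <-]]] : (k <= j < M)%N by lia.
by apply: fg_br; apply: IH; lia.
Qed.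

Lemma der_eq_of_generators (f g : V -> V) k : is_der br f -> is_der br g ->
  bracket_generated k -> (forall j, (j <= k)%N -> f (b j) = g (b j)) ->
  forall v, f v = g v.
Proof.
move=> [f_lin f_der] [g_lin g_der]; apply: lin_eq_of_generators => // u v fu fv.
by rewrite f_der g_der fu fv.
Qed.

Lemma antider_eq_of_generators (f g : V -> V) k : is_antider br f -> is_antider br g ->
  bracket_generated k -> (forall j, (j <= k)%N -> f (b j) = g (b j)) ->
  forall v, f v = g v.
Proof.
move=> [f_lin f_anti] [g_lin g_anti]; apply: lin_eq_of_generators => // u v fu fv.
by rewrite f_anti g_anti fu fv.
Qed.
End Generators.

Lemma sum_iota_pick (F : fieldType) (a b s m : nat) (g : nat -> F) :
  \sum_(j <- iota a b) g j * (if j + s == m then 1 else 0)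
  = if ((a + s <= m) && (m < a + b + s))%N then g (m - s)%N else 0.
Proof.
elim: b a => [|b IH] a; first by rewrite big_nil; case: ifP => //; lia.
rewrite /= big_cons IH; case: eqP => [j_m | ne_jm].
  rewrite mulr1; case: ifP; first lia.
  by case: ifP; last lia; rewrite addr0 -j_m addnK.
by rewrite mulr0 add0r; case: ifP; case: ifP => //; lia.
Qed.

Lemma eq_of_diff (V : zmodType) (a b l r : V) : a - b = l - r -> l = r -> a = b.
Proof. by move=> ab_lr lr; apply/eqP; rewrite -subr_eq0 ab_lr lr subrr. Qed.

(* Proves a = b from E : l = r when a - b and l - r (or r - l) agree as polynomials. *)
Ltac by_diff E := first [apply: (eq_of_diff _ E); ring | apply: (eq_of_diff _ (esym E)); ring].

Lemma pnatr_mul_eq0 (F : numDomainType) (k : nat) (a : F) : k.+1%:R * a = 0 -> a = 0.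
Proof. by move/eqP; rewrite mulf_eq0 pnatr_eq0 => /eqP. Qed.

Section AlgebraR.
Variables (F : numFieldType) (n : nat).
Hypothesis n_ge2 : (2 <= n)%N.
Local Notation N := n.+1.
Local Notation V := 'rV[F]_N.
Local Notation br := (brk (tabR F n)).
Local Notation b := (bv F n).
Local Notation h := (b 0).
Local Notation e k := (b k).

Definition brR_coord (X Y : nat -> F) (m : nat) : F :=
  match m with
  | 0 => 0
  | 1 => X 1%N * Y 0%N - X 0%N * Y 1%N
  | m'.+2 => X m'.+1 * Y 1%N + (m'.+2)%:R * X m'.+2 * Y 0%N
  end.

Lemma coordn_brR x y m : (m < N)%N -> coordn (br x y) m = brR_coord (coordn x) (coordn y) m.
Proof.
move=> lt_mN; rewrite coordn_brk /tabR !big_cat !big_map big_cons big_nil /=.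
rewrite (@eq_big_seq _ _ _ _ (iota 1 (n - 1)) _
  (fun j => coordn x j * coordn y 1%N * (if (j + 1)%N == m then 1 else 0))); last first.
  by move=> j; rewrite mem_iota => /andP [? ?]; rewrite coordn_bv ?addn1 //; lia.
rewrite (@eq_big_seq _ _ _ _ (iota 1 n) _
  (fun j => coordn x j * coordn y 0%N * j%:R * (if (j + 0)%N == m then 1 else 0))); last first.
  by move=> j; rewrite mem_iota => /andP [? ?]; rewrite coordnZ coordn_bv ?addn0; [ring | lia].
rewrite !sum_iota_pick coordnN coordn_bv; last lia.
case: m lt_mN => [|[|m]] lt_mN /=; repeat (case: ifP => ?; try (exfalso; lia));
  rewrite ?subn1 ?subn0 /=; ring.
Qed.

Ltac coordn_simp :=
  rewrite ?(coordn0, coordnB, coordnN, coordnD, coordnZ, coordn_brR) /= ?coordn_bv /=; try lia.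
Ltac coordn_at H k := have := congr1 (fun w => coordn w k) H; coordn_simp.
Ltac basis_calc := apply: coordn_inj => -[|[|m]] lt_mN; coordn_simp;
  repeat (case: ifP => /eqP ?; try (exfalso; lia)); ring.

Lemma leibnizR x y z : br x (br y z) = br (br x y) z - br (br x z) y.
Proof.
apply: coordn_inj => m lt_mN; rewrite coordnB !coordn_brR //.
case: m lt_mN => [|[|[|m]]] lt_mN /=; rewrite ?coordn_brR /=; try lia; ring.
Qed.

Lemma brR_hh : br h h = 0. Proof. by basis_calc. Qed.
Lemma brR_e1h : br (e 1) h = e 1. Proof. by basis_calc. Qed.
Lemma brR_chain j : (1 <= j < n)%N -> br (e j) (e 1) = e j.+1.
Proof. by move=> ?; basis_calc. Qed.

Lemma bracket_generatedR : bracket_generated br 1.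
Proof. by move=> j j_range; exists j, 1%N; split; [| lia | exact: brR_chain]. Qed.

Lemma centerR_trivial : center_trivial br.
Proof.
move=> x annr annl; apply: coordn_inj => -[|[|m]] lt_mN; rewrite coordn0.
- by coordn_at (annr (e 1)) 1%N => E; by_diff E.
- by coordn_at (annl h) 1%N => E; by_diff E.
- by coordn_at (annl h) m.+2 => E; apply: (@pnatr_mul_eq0 _ m.+1); by_diff E.
Qed.

Section DerivationR.
Variable d : V -> V.
Hypothesis der_d : is_der br d.

Lemma derR_h : d h = coordn (d h) 1 *: e 1.
Proof.
apply: coordn_inj => -[|[|m]] lt_mN; coordn_simp; try ring.
  by coordn_at (der_rel brR_e1h der_d) 1%N => E; by_diff E.
rewrite mulr0; apply: (@pnatr_mul_eq0 _ m.+1).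
by coordn_at (der_rel0 brR_hh der_d) m.+2 => E; by_diff E.
Qed.

Lemma derR_e1 : d (e 1) = coordn (d (e 1)) 1 *: e 1 - coordn (d h) 1 *: e 2.
Proof.
have De1h := der_rel brR_e1h der_d.
apply: coordn_inj => -[|[|[|m]]] lt_mN; coordn_simp; try ring.
- by coordn_at De1h 0%N => E; by_diff E.
- by coordn_at De1h 2%N => E; by_diff E.
- rewrite !mulr0 subr0; apply: (@pnatr_mul_eq0 _ m.+1).
  by coordn_at De1h m.+3 => E; by_diff E.
Qed.

Lemma derR_inner : exists x, forall v, d v = - br v x.
Proof.
exists (\row_(k < N) [:: - coordn (d (e 1)) 1; coordn (d h) 1]`_k).
apply: (der_eq_of_generators der_d (right_mul_der (lin_brkl _) (lin_brkr _) leibnizR _)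
  bracket_generatedR).
move=> -[|[|//]] _; [rewrite {1}derR_h | rewrite {1}derR_e1];
  apply: coordn_inj => -[|[|[|m]]] lt_mN; coordn_simp; rewrite ?coordn_row /=; try lia; ring.
Qed.
End DerivationR.

Lemma annrR_coord z : (forall u, br u z = 0) -> coordn z 0 = 0 /\ coordn z 1 = 0.
Proof.
move=> annr; split; first by coordn_at (annr (e 1)) 1%N => E; by_diff E.
by coordn_at (annr (e 1)) 2%N => E; by_diff E.
Qed.

Lemma pure_antiderR_inner : pure_antider_inner br.
Proof.
move=> D anti_D pure_D.
have [a0 a1] := annrR_coord (pure_D^~ h).
have [y0 y1] := annrR_coord (pure_D^~ (e 1)).
have De1h := antider_rel brR_e1h anti_D.
have y_ge2 m : (m.+2 < N)%N -> m.+1%:R * coordn (D (e 1)) m.+2 = coordn (D h) m.+1.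
  by move=> ?; coordn_at De1h m.+2 => E; by_diff E.
have y2 : coordn (D (e 1)) 2 = 0 by rewrite -a1 -y_ge2 ?mul1r.
pose z : V := \row_(k < N) (coordn (D h) k / k%:R).
have z_coord j : coordn z j = coordn (D h) j / j%:R.
  have [lt_jN | le_Nj] := ltnP j N; first exact: (coordn_row (fun k => coordn (D h) k / k%:R)).
  by rewrite !coordn_out // mul0r.
have z0 : coordn z 0 = 0 by rewrite z_coord a0 mul0r.
have z1 : coordn z 1 = 0 by rewrite z_coord a1 mul0r.
exists z; split.
  by move=> v; apply: coordn_inj => -[|[|m]] lt_mN; coordn_simp; rewrite ?z0 ?z1; ring.
apply: (antider_eq_of_generators anti_D (left_mul_antider (lin_brkr _) leibnizR _)
  bracket_generatedR).
move=> -[|[|//]] _; apply: coordn_inj => -[|[|[|m]]] lt_mN; coordn_simp;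
  rewrite ?z_coord /= ?a0 ?a1 ?y0 ?y1 ?y2; try ring.
all: rewrite -?(y_ge2 m.+1) //; field; by rewrite -?natrD ?pnatr_eq0.
Qed.

Lemma bider_iso_selfR : bider_iso_self br.
Proof.
exact: (bider_iso_self_of_inner (lin_brkl _) (lin_brkr _) leibnizR centerR_trivial
  derR_inner pure_antiderR_inner).
Qed.
End AlgebraR.

Section AlgebraRF.
Variables (F : numFieldType) (n : nat).
Hypothesis n_ge4 : (4 <= n)%N.
Local Notation N := n.+2.
Local Notation V := 'rV[F]_N.
Local Notation br := (brk (tabRF F n)).
Local Notation b := (bv F n.+1).
Local Notation h1 := (b 0).
Local Notation h2 := (b 1).
Local Notation e k := (b k.+1).

Definition brRF_coord (X Y : nat -> F) (m : nat) : F :=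
  match m with
  | 0 | 1 => 0
  | 2 => X 2%N * Y 1%N - X 1%N * Y 2%N
  | 3 => X 3%N * (Y 0%N + Y 1%N)
  | m'.+4 => X m'.+3 * Y 2%N + X m'.+4 * (Y 0%N + m'.+2%:R * Y 1%N)
  end.

Lemma coordn_brRF x y m : (m < N)%N -> coordn (br x y) m = brRF_coord (coordn x) (coordn y) m.
Proof.
move=> lt_mN; rewrite coordn_brk /tabRF !big_cat !big_map !big_cons big_nil /= -big_split /=.
rewrite (@eq_big_seq _ _ _ _ (iota 2 (n - 2)) _
  (fun j => coordn x j.+1 * coordn y 2%N * (if (j + 2)%N == m then 1 else 0))); last first.
  by move=> j; rewrite mem_iota => /andP [? ?]; rewrite coordn_bv ?addn2 //; lia.
rewrite (@eq_big_seq _ _ _ _ (iota 2 (n - 1)) _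
  (fun j => coordn x j.+1 * (coordn y 0%N + (j - 1)%:R * coordn y 1%N) *
     (if (j + 1)%N == m then 1 else 0))); last first.
  by move=> j; rewrite mem_iota => /andP [? ?]; rewrite coordnZ !coordn_bv ?addn1; [ring | lia..].
rewrite !sum_iota_pick coordnN !coordn_bv; try lia.
case: m lt_mN => [|[|[|[|m]]]] lt_mN /=; repeat (case: ifP => ?; try (exfalso; lia));
  rewrite ?subn1 ?subn2 /=; ring.
Qed.

Ltac coordn_simp :=
  rewrite ?(coordn0, coordnB, coordnN, coordnD, coordnZ, coordn_brRF) /= ?coordn_bv /=; try lia.
Ltac coordn_at H k := have := congr1 (fun w => coordn w k) H; coordn_simp.
Ltac basis_calc := apply: coordn_inj => -[|[|[|[|m]]]] lt_mN; coordn_simp;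
  repeat (case: ifP => /eqP ?; try (exfalso; lia)); ring.

Lemma leibnizRF x y z : br x (br y z) = br (br x y) z - br (br x z) y.
Proof.
apply: coordn_inj => m lt_mN; rewrite coordnB !coordn_brRF //.
case: m lt_mN => [|[|[|[|[|m]]]]] lt_mN /=; rewrite ?coordn_brRF /=; try lia; ring.
Qed.

Lemma brRF_h1h1 : br h1 h1 = 0. Proof. by basis_calc. Qed.
Lemma brRF_h2h2 : br h2 h2 = 0. Proof. by basis_calc. Qed.
Lemma brRF_h2h1 : br h2 h1 = 0. Proof. by basis_calc. Qed.
Lemma brRF_e1h1 : br (e 1) h1 = 0. Proof. by basis_calc. Qed.
Lemma brRF_e1h2 : br (e 1) h2 = e 1. Proof. by basis_calc. Qed.
Lemma brRF_e2h1 : br (e 2) h1 = e 2. Proof. by basis_calc. Qed.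
Lemma brRF_e2h2 : br (e 2) h2 = e 2. Proof. by basis_calc. Qed.
Lemma brRF_h2e2 : br h2 (e 2) = 0. Proof. by basis_calc. Qed.
Lemma brRF_chain k : (2 <= k < n)%N -> br (e k) (e 1) = e k.+1.
Proof. by move=> ?; basis_calc. Qed.

Lemma bracket_generatedRF : bracket_generated br 3.
Proof.
by move=> -[//|k] k_range; exists k.+1, 2%N; split; [| lia | apply: brRF_chain; lia].
Qed.

Section DerivationRF.
Variable d : V -> V.
Hypothesis der_d : is_der br d.

Lemma derRF_h1 : d h1 = 0.
Proof.
have De1h1 := der_rel0 brRF_e1h1 der_d; have De2h1 := der_rel brRF_e2h1 der_d.
have d0_1 : coordn (d h1) 1 = 0 by coordn_at De1h1 2%N => E; by_diff E.
apply: coordn_inj => -[|[|[|m]]] lt_mN; rewrite coordn0 //.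
- by coordn_at De2h1 3%N => E; rewrite d0_1 in E; by_diff E.
- by coordn_at De2h1 4%N => E; by_diff E.
- by case: m => [|m] in lt_mN *; [coordn_at (der_rel0 brRF_h1h1 der_d) 3%N
    | coordn_at (der_rel0 brRF_h1h1 der_d) m.+4] => E; by_diff E.
Qed.

Lemma derRF_h2 : d h2 = coordn (d h2) 2 *: e 1.
Proof.
have De1h2 := der_rel brRF_e1h2 der_d; have Dh2h2 := der_rel0 brRF_h2h2 der_d.
have d1_1 : coordn (d h2) 1 = 0 by coordn_at De1h2 2%N => E; by_diff E.
apply: coordn_inj => -[|[|[|[|m]]]] lt_mN; coordn_simp; rewrite ?d1_1; try ring.
- by coordn_at (der_rel brRF_e2h2 der_d) 3%N => E; rewrite d1_1 in E; by_diff E.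
- by coordn_at Dh2h2 3%N => E; by_diff E.
- by rewrite mulr0; coordn_at Dh2h2 m.+4 => E; apply: (@pnatr_mul_eq0 _ m.+1); by_diff E.
Qed.

Lemma derRF_e1 : d (e 1) = coordn (d (e 1)) 2 *: e 1.
Proof.
have De1h2 := der_rel brRF_e1h2 der_d; have De1h1 := der_rel0 brRF_e1h1 der_d.
apply: coordn_inj => -[|[|[|[|m]]]] lt_mN; coordn_simp; try ring.
- by coordn_at De1h2 0%N => E; by_diff E.
- by coordn_at De1h2 1%N => E; by_diff E.
- by coordn_at De1h1 3%N => E; by_diff E.
- by coordn_at De1h1 m.+4 => E; by_diff E.
Qed.

Lemma derRF_e2 : d (e 2) = coordn (d (e 2)) 3 *: e 2 - coordn (d h2) 2 *: e 3.
Proof.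
have De2h1 := der_rel brRF_e2h1 der_d; have De2h2 := der_rel brRF_e2h2 der_d.
apply: coordn_inj => -[|[|[|[|[|m]]]]] lt_mN; coordn_simp; try ring.
- by coordn_at De2h1 0%N => E; by_diff E.
- by coordn_at De2h1 1%N => E; by_diff E.
- by coordn_at De2h1 2%N => E; by_diff E.
- by coordn_at De2h2 4%N => E; by_diff E.
- by rewrite !mulr0 subr0; coordn_at De2h2 m.+4.+1 => E; apply: (@pnatr_mul_eq0 _ m.+1); by_diff E.
Qed.

Lemma derRF_inner : exists x, forall v, d v = - br v x.
Proof.
exists (\row_(k < N) [:: coordn (d (e 1)) 2 - coordn (d (e 2)) 3; - coordn (d (e 1)) 2;
                        coordn (d h2) 2]`_k).
apply: (der_eq_of_generators der_d (right_mul_der (lin_brkl _) (lin_brkr _) leibnizRF _)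
  bracket_generatedRF).
move=> -[|[|[|[|//]]]] _;
  [rewrite derRF_h1 | rewrite derRF_h2 | rewrite {1}derRF_e1 | rewrite {1}derRF_e2];
  apply: coordn_inj => -[|[|[|[|[|m]]]]] lt_mN; coordn_simp; rewrite ?coordn_row /=; try lia; ring.
Qed.
End DerivationRF.

Lemma centerRF_trivial : center_trivial br.
Proof.
move=> x annr annl.
have x1 : coordn x 1 = 0 by coordn_at (annl (e 1)) 2%N => E; by_diff E.
have x2 : coordn x 2 = 0 by coordn_at (annl h2) 2%N => E; by_diff E.
apply: coordn_inj => -[|[|[|[|m]]]] lt_mN; rewrite coordn0 ?x1 ?x2 //.
- by coordn_at (annr (e 2)) 3%N => E; rewrite x1 in E; by_diff E.
- by coordn_at (annl h1) 3%N => E; by_diff E.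
- by coordn_at (annl h1) m.+4 => E; by_diff E.
Qed.

Lemma annrRF_coord z : (forall u, br u z = 0) ->
  [/\ coordn z 0 = 0, coordn z 1 = 0 & coordn z 2 = 0].
Proof.
move=> annr.
have z1 : coordn z 1 = 0 by coordn_at (annr (e 1)) 2%N => E; by_diff E.
split=> //; last by coordn_at (annr h2) 2%N => E; by_diff E.
by coordn_at (annr (e 2)) 3%N => E; rewrite z1 in E; by_diff E.
Qed.

Lemma pure_antiderRF_inner : pure_antider_inner br.
Proof.
move=> D anti_D pure_D.
have [a0 a1 a2] := annrRF_coord (pure_D^~ h1).
have [y0 y1 y2] := annrRF_coord (pure_D^~ h2).
have [u0 u1 u2] := annrRF_coord (pure_D^~ (e 1)).
have [w0 w1 w2] := annrRF_coord (pure_D^~ (e 2)).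
have Dh2h1 := antider_rel0 brRF_h2h1 anti_D; have De1h1 := antider_rel0 brRF_e1h1 anti_D.
have De2h2 := antider_rel brRF_e2h2 anti_D; have Dh2e2 := antider_rel0 brRF_h2e2 anti_D.
have y3 : coordn (D h2) 3 = coordn (D h1) 3 by coordn_at Dh2h1 3%N => E; by_diff E.
have y_ge4 m : (m.+4 < N)%N -> coordn (D h2) m.+4 = m.+2%:R * coordn (D h1) m.+4.
  by move=> ?; coordn_at Dh2h1 m.+4 => E; by_diff E.
have u3 : coordn (D (e 1)) 3 = 0 by coordn_at De1h1 3%N => E; by_diff E.
have u_ge4 m : (m.+4 < N)%N -> coordn (D (e 1)) m.+4 = coordn (D h1) m.+3.
  by move=> ?; coordn_at De1h1 m.+4 => E; by_diff E.
have w3 : coordn (D (e 2)) 3 = 0 by coordn_at Dh2e2 3%N => E; by_diff E.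
have w_ge4 m : (m.+4 < N)%N -> coordn (D (e 2)) m.+4 = 0.
  by move=> ?; coordn_at De2h2 m.+4 => E; apply: (@pnatr_mul_eq0 _ m); by_diff E.
exists (D h1); split=> [v | ]; first exact: pure_D.
apply: (antider_eq_of_generators anti_D (left_mul_antider (lin_brkr _) leibnizRF _)
  bracket_generatedRF).
move=> -[|[|[|[|//]]]] _; apply: coordn_inj => -[|[|[|[|[|m]]]]] lt_mN; coordn_simp;
  rewrite ?a0 ?a1 ?a2 ?y0 ?y1 ?y2 ?y3 ?y_ge4 ?u0 ?u1 ?u2 ?u3 ?u_ge4 ?w0 ?w1 ?w2 ?w3 ?w_ge4;
  try lia; ring.
Qed.

Lemma bider_iso_selfRF : bider_iso_self br.
Proof.
exact: (bider_iso_self_of_inner (lin_brkl _) (lin_brkr _) leibnizRF centerRF_trivial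
  derRF_inner pure_antiderRF_inner).
Qed.
End AlgebraRF.

Section AlgebraL.
Variables (F : numFieldType) (n : nat).
Hypothesis n_ge4 : (4 <= n)%N.
Local Notation N := n.+2.
Local Notation V := 'rV[F]_N.
Local Notation b := (bv F n.+1).
Local Notation h1 := (b 0).
Local Notation h2 := (b 1).
Local Notation e k := (b k.+1).

Definition brL_coord (c : F) (X Y : nat -> F) (m : nat) : F :=
  match m with
  | 0 | 1 => 0
  | 2 => X 2%N * Y 1%N - X 1%N * Y 2%N
  | 3 => X 3%N * Y 0%N - c * X 0%N * Y 3%N
  | 4 => X 2%N * Y 2%N + 2 * X 4%N * Y 1%N
  | m'.+4.+1 => X m'.+4 * Y 2%N + m'.+3%:R * X m'.+4.+1 * Y 1%N
  end.

Lemma coordn_brL2 x y m : (m < N)%N ->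
  coordn (brk (tabL2 F n) x y) m = brL_coord 0 (coordn x) (coordn y) m.
Proof.
move=> lt_mN; rewrite coordn_brk /tabL2 !big_cat !big_map !big_cons !big_nil /=.
rewrite (@eq_big_seq _ _ _ _ (iota 3 (n - 3)) _
  (fun j => coordn x j.+1 * coordn y 2%N * (if (j + 2)%N == m then 1 else 0))); last first.
  by move=> j; rewrite mem_iota => /andP [? ?]; rewrite coordn_bv ?addn2 //; lia.
rewrite (@eq_big_seq _ _ _ _ (iota 3 (n - 2)) _
  (fun j => coordn x j.+1 * ((j - 1)%:R * coordn y 1%N) * (if (j + 1)%N == m then 1 else 0)));
  last first.
  by move=> j; rewrite mem_iota => /andP [? ?]; rewrite coordnZ !coordn_bv ?addn1; [ring | lia..].
rewrite !sum_iota_pick coordnN !coordn_bv; try lia.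
case: m lt_mN => [|[|[|[|[|m]]]]] lt_mN /=; repeat (case: ifP => ?; try (exfalso; lia));
  rewrite ?subn1 ?subn2 /=; ring.
Qed.

Lemma coordn_brL1 x y m : (m < N)%N ->
  coordn (brk (tabL1 F n) x y) m = brL_coord 1 (coordn x) (coordn y) m.
Proof.
move=> lt_mN; rewrite coordn_brk /tabL1 big_cat -coordn_brk coordn_brL2 // big_cons big_nil /=.
by rewrite coordnN coordn_bv; [case: m lt_mN => [|[|[|[|[|m]]]]] lt_mN /=; ring | lia].
Qed.

(* The two algebras differ only in [h1, e2] = - c e2: c = 1 in L1, c = 0 in L2. *)
Variables (l : table F N) (c : F).
Hypothesis coordn_brL : forall x y m, (m < N)%N ->
  coordn (brk l x y) m = brL_coord c (coordn x) (coordn y) m.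
Hypothesis c01 : c = 0 \/ c = 1.
Local Notation br := (brk l).

Ltac coordn_simp :=
  rewrite ?(coordn0, coordnB, coordnN, coordnD, coordnZ, coordn_brL) /= ?coordn_bv /=; try lia.
Ltac coordn_at H k := have := congr1 (fun w => coordn w k) H; coordn_simp.
Ltac basis_calc := apply: coordn_inj => -[|[|[|[|[|m]]]]] lt_mN; coordn_simp;
  repeat (case: ifP => /eqP ?; try (exfalso; lia)); ring.

Lemma leibnizL x y z : br x (br y z) = br (br x y) z - br (br x z) y.
Proof.
apply: coordn_inj => -[|[|[|[|[|[|m]]]]]] lt_mN; rewrite coordnB !coordn_brL //=;
  rewrite ?coordn_brL /=; try lia; try ring.
by case: c01 => ->; ring.
Qed.

Lemma brL_h1h1 : br h1 h1 = 0. Proof. by basis_calc. Qed.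
Lemma brL_h1h2 : br h1 h2 = 0. Proof. by basis_calc. Qed.
Lemma brL_h2h1 : br h2 h1 = 0. Proof. by basis_calc. Qed.
Lemma brL_h2h2 : br h2 h2 = 0. Proof. by basis_calc. Qed.
Lemma brL_e1h1 : br (e 1) h1 = 0. Proof. by basis_calc. Qed.
Lemma brL_e1h2 : br (e 1) h2 = e 1. Proof. by basis_calc. Qed.
Lemma brL_e2h1 : br (e 2) h1 = e 2. Proof. by basis_calc. Qed.
Lemma brL_e2h2 : br (e 2) h2 = 0. Proof. by basis_calc. Qed.
Lemma brL_h1e2 : br h1 (e 2) = - c *: e 2. Proof. by basis_calc. Qed.
Lemma brL_e1e1 : br (e 1) (e 1) = e 3. Proof. by basis_calc. Qed.
Lemma brL_chain k : (3 <= k < n)%N -> br (e k) (e 1) = e k.+1.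
Proof. by move=> ?; basis_calc. Qed.

Lemma bracket_generatedL : bracket_generated br 3.
Proof.
move=> -[//|k] k_range; have [-> | k_ne2] := eqVneq k 2%N.
  by exists 2%N, 2%N; rewrite brL_e1e1.
by exists k.+1, 2%N; split; [| lia | apply: brL_chain; lia].
Qed.

Section DerivationL.
Variable d : V -> V.
Hypothesis der_d : is_der br d.

Lemma derL_h1 : d h1 = coordn (d h1) 3 *: e 2.
Proof.
have Dh1h2 := der_rel0 brL_h1h2 der_d.
apply: coordn_inj => -[|[|[|[|m]]]] lt_mN; coordn_simp; try ring.
- by coordn_at (der_rel brL_e2h1 der_d) 3%N => E; by_diff E.
- by coordn_at (der_rel0 brL_e1h1 der_d) 2%N => E; by_diff E.
- by coordn_at Dh1h2 2%N => E; by_diff E.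
- rewrite mulr0; apply: (@pnatr_mul_eq0 _ m.+1).
  by case: m => [|m] in lt_mN *; [coordn_at Dh1h2 4%N | coordn_at Dh1h2 m.+4.+1] => E; by_diff E.
Qed.

Lemma derL_h1_coord3 : (1 - c) * coordn (d h1) 3 = 0.
Proof. by coordn_at (der_rel0 brL_h1h1 der_d) 3%N => E; by_diff E. Qed.

Lemma derL_h2 : d h2 = coordn (d h2) 2 *: e 1.
Proof.
have Dh2h2 := der_rel0 brL_h2h2 der_d.
apply: coordn_inj => -[|[|[|[|m]]]] lt_mN; coordn_simp; try ring.
- by coordn_at (der_rel0 brL_e2h2 der_d) 3%N => E; by_diff E.
- by coordn_at (der_rel brL_e1h2 der_d) 2%N => E; by_diff E.
- by coordn_at (der_rel0 brL_h2h1 der_d) 3%N => E; by_diff E.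
- rewrite mulr0; apply: (@pnatr_mul_eq0 _ m.+1).
  by case: m => [|m] in lt_mN *; [coordn_at Dh2h2 4%N | coordn_at Dh2h2 m.+4.+1] => E; by_diff E.
Qed.

Lemma derL_e1 : d (e 1) = coordn (d (e 1)) 2 *: e 1 - coordn (d h2) 2 *: e 3.
Proof.
have De1h2 := der_rel brL_e1h2 der_d.
apply: coordn_inj => -[|[|[|[|[|m]]]]] lt_mN; coordn_simp; try ring.
- by coordn_at De1h2 0%N => E; by_diff E.
- by coordn_at De1h2 1%N => E; by_diff E.
- by coordn_at (der_rel0 brL_e1h1 der_d) 3%N => E; by_diff E.
- by coordn_at De1h2 4%N => E; by_diff E.
- rewrite !mulr0 subr0; apply: (@pnatr_mul_eq0 _ m.+1).
  by coordn_at De1h2 m.+4.+1 => E; by_diff E.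
Qed.

Lemma derL_e2 : d (e 2) = coordn (d (e 2)) 3 *: e 2.
Proof.
have De2h1 := der_rel brL_e2h1 der_d.
apply: coordn_inj => -[|[|[|[|[|m]]]]] lt_mN; coordn_simp; try ring;
  [coordn_at De2h1 0%N | coordn_at De2h1 1%N | coordn_at De2h1 2%N | coordn_at De2h1 4%N
  | coordn_at De2h1 m.+4.+1] => E; by_diff E.
Qed.

Lemma derL_inner : exists x, forall v, d v = - br v x.
Proof.
exists (\row_(k < N) [:: - coordn (d (e 2)) 3; - coordn (d (e 1)) 2; coordn (d h2) 2;
                        coordn (d h1) 3]`_k).
apply: (der_eq_of_generators der_d (right_mul_der (lin_brkl _) (lin_brkr _) leibnizL _)
  bracket_generatedL).
move=> -[|[|[|[|//]]]] _;
  [rewrite {1}derL_h1 | rewrite {1}derL_h2 | rewrite {1}derL_e1 | rewrite {1}derL_e2];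
  apply: coordn_inj => -[|[|[|[|[|m]]]]] lt_mN; coordn_simp; rewrite ?coordn_row /=; try lia;
  try ring.
by_diff derL_h1_coord3.
Qed.
End DerivationL.

Lemma centerL_trivial : center_trivial br.
Proof.
move=> x annr annl; apply: coordn_inj => -[|[|[|[|[|m]]]]] lt_mN; rewrite coordn0.
- by coordn_at (annr (e 2)) 3%N => E; by_diff E.
- by coordn_at (annl (e 1)) 2%N => E; by_diff E.
- by coordn_at (annl h2) 2%N => E; by_diff E.
- by coordn_at (annl h1) 3%N => E; by_diff E.
- by coordn_at (annl h2) 4%N => E; apply: (@pnatr_mul_eq0 _ 1%N); by_diff E.
- by coordn_at (annl h2) m.+4.+1 => E; apply: (@pnatr_mul_eq0 _ m.+2); by_diff E.
Qed.

Lemma annrL_coord z : (forall u, br u z = 0) ->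
  [/\ coordn z 0 = 0, coordn z 1 = 0, coordn z 2 = 0 & c * coordn z 3 = 0].
Proof.
move=> annr; split; first by coordn_at (annr (e 2)) 3%N => E; by_diff E.
- by coordn_at (annr (e 1)) 2%N => E; by_diff E.
- by coordn_at (annr h2) 2%N => E; by_diff E.
- by coordn_at (annr h1) 3%N => E; by_diff E.
Qed.

Lemma pure_antiderL_inner : pure_antider_inner br.
Proof.
move=> D anti_D pure_D.
have [a0 a1 a2 ca3] := annrL_coord (pure_D^~ h1).
have [y0 y1 y2 _] := annrL_coord (pure_D^~ h2).
have [u0 u1 u2 _] := annrL_coord (pure_D^~ (e 1)).
have [w0 w1 w2 cw3] := annrL_coord (pure_D^~ (e 2)).
have Dh2h1 := antider_rel0 brL_h2h1 anti_D; have De1h2 := antider_rel brL_e1h2 anti_D.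
have De2h1 := antider_rel brL_e2h1 anti_D.
have Dh1e2 := antider_rel brL_h1e2 anti_D; rewrite (linZ anti_D.1) in Dh1e2.
have a_ge4 m : (m.+4 < N)%N -> coordn (D h1) m.+4 = 0.
  move=> lt_mN; apply: (@pnatr_mul_eq0 _ m.+1).
  by case: m => [|m] in lt_mN *; [coordn_at Dh2h1 4%N | coordn_at Dh2h1 m.+4.+1] => E; by_diff E.
have y3 : coordn (D h2) 3 = 0 by coordn_at Dh2h1 3%N => E; by_diff E.
have u3 : coordn (D (e 1)) 3 = 0 by coordn_at De1h2 3%N => E; by_diff E.
have u4 : coordn (D (e 1)) 4 = 0 by coordn_at De1h2 4%N => E; rewrite y2 in E; by_diff E.
have u_ge5 m : (m.+4.+1 < N)%N -> m.+2%:R * coordn (D (e 1)) m.+4.+1 = coordn (D h2) m.+4.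
  by move=> ?; coordn_at De1h2 m.+4.+1 => E; by_diff E.
have w3 : coordn (D (e 2)) 3 = 0.
  by rewrite -cw3; coordn_at Dh1e2 3%N => E; rewrite a0 in E; by_diff E.
have w_ge4 m : (m.+4 < N)%N -> coordn (D (e 2)) m.+4 = 0.
  by case: m => [|m] ?; [coordn_at De2h1 4%N | coordn_at De2h1 m.+4.+1] => E; by_diff E.
pose zf k := match k with
  | 3 => coordn (D h1) 3 | k'.+4 => coordn (D h2) k'.+4 / k'.+2%:R | _ => 0 end.
pose z : V := \row_(k < N) zf k.
have z_coord j : (j < N)%N -> coordn z j = zf j by exact: coordn_row.
exists z; split.
  move=> v; apply: coordn_inj => -[|[|[|[|[|m]]]]] lt_mN; coordn_simp; rewrite ?z_coord /=; try lia;
    first [ring | by rewrite mulrAC ca3; ring].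
apply: (antider_eq_of_generators anti_D (left_mul_antider (lin_brkr _) leibnizL _)
  bracket_generatedL).
move=> -[|[|[|[|//]]]] _; apply: coordn_inj => -[|[|[|[|[|m]]]]] lt_mN; coordn_simp;
  rewrite ?z_coord /= ?a0 ?a1 ?a2 ?a_ge4 ?y0 ?y1 ?y2 ?y3 ?u0 ?u1 ?u2 ?u3 ?u4 ?w0 ?w1 ?w2 ?w3 ?w_ge4;
  try lia; try ring.
all: try rewrite -(u_ge5 m) //; field; by rewrite -?natrD ?pnatr_eq0.
Qed.

Lemma bider_iso_selfL : bider_iso_self br.
Proof.
exact: (bider_iso_self_of_inner (lin_brkl _) (lin_brkr _) leibnizL centerL_trivial
  derL_inner pure_antiderL_inner).
Qed.
End AlgebraL.

Theorem mainTheorem15 (R : realType) :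
  (forall n : nat, (2 <= n)%N -> bider_iso_self (brk (tabR R[i] n)))
  /\ (forall n : nat, (4 <= n)%N ->
        [/\ bider_iso_self (brk (tabRF R[i] n)),
            bider_iso_self (brk (tabL1 R[i] n))
          & bider_iso_self (brk (tabL2 R[i] n))]).
Proof.
split=> n n_ge; first exact: bider_iso_selfR.
split; first exact: bider_iso_selfRF.
- by apply: (bider_iso_selfL n_ge (coordn_brL1 n_ge)); right.
- by apply: (bider_iso_selfL n_ge (coordn_brL2 n_ge)); left.
Qed.
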